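(* Let $(G_n)_{n\in\mathbb N}$ and $(H_n)_{n\in\mathbb N}$ be sequences of groups and let $(P_n)_{n\in\mathbb N}$ be a partition of $\mathbb N$ into finite sets. If for every $n$ there is an injective homomorphism $\varphi_n:G_n\to *_{i\in P_n}H_i$, then $\mathcal A(G_n)$ embeds in $\mathcal A(H_n)$.
   Context: For a sequence of groups $(G_n)_{n\in\mathbb N}$, an infinite word is a map $w:L\to\bigsqcup_n (G_n\setminus\{1\})$ from a countable linearly ordered set $L$ such that $w^{-1}(G_n)$ is finite for every $n$. Two infinite words are equivalent if for every $m$ their restrictions to the letters from $G_1,\dots,G_m$ represent the same element of $G_1*\cdots*G_m$. The topologist's product $\circledast_n G_n$ is the group of equivalence classes, with multiplication induced by concatenation and inversion by reversing the order and inverting each letter. The free product $*_n G_n$ is the subgroup of classes of finite words. The archipelago group is $\mathcal A(G_n):=\circledast_n G_n/\langle\langle *_n G_n\rangle\rangle$ (quotient by normal closure). *)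

From Stdlib Require Import List Relations Sorting.Sorted Arith Lia.
Import ListNotations.
Set Implicit Arguments.

Record group := Group {
  gcar :> Type;
  gmul : gcar -> gcar -> gcar;
  ginv : gcar -> gcar;
  gone : gcar;
  gmulA : forall x y z, gmul x (gmul y z) = gmul (gmul x y) z;
  gmul1g : forall x, gmul gone x = x;
  gmulVg : forall x, gmul (ginv x) x = gone }.
Arguments gmul {g}.
Arguments ginv {g}.
Arguments gone g : clear implicits.

Lemma ginv_eq1 (G : group) (x : G) : ginv x = gone G -> x = gone G.
Proof. intro h. pose proof (@gmulVg G x) as e. rewrite h, gmul1g in e. exact e. Qed.

Definition letter (G : nat -> group) := {n : nat & gcar (G n)}.

Unset Implicit Arguments.
Inductive fp_step (G : nat -> group) (S : nat -> Prop) :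
    list (letter G) -> list (letter G) -> Prop :=
| fps_merge u v n (g h : G n) :
    fp_step G S (u ++ existT _ n g :: existT _ n h :: v)
                (u ++ existT _ n (gmul g h) :: v)
| fps_drop u v n : S n ->
    fp_step G S (u ++ existT _ n (gone (G n)) :: v) (u ++ v).
Set Implicit Arguments.

(* Two finite words (with letters from the G n, n in S) represent the same
   element of the free product *_{n in S} G_n. *)
Definition fp_eq (G : nat -> group) (S : nat -> Prop) :
    list (letter G) -> list (letter G) -> Prop :=
  clos_refl_sym_trans _ (fp_step G S).

Record iword (G : nat -> group) := IWord {
  iw_L : Type;
  iw_lt : iw_L -> iw_L -> Prop;
  iw_irrefl : forall x, ~ iw_lt x x;
  iw_trans : forall x y z, iw_lt x y -> iw_lt y z -> iw_lt x z;
  iw_total : forall x y, iw_lt x y \/ x = y \/ iw_lt y x;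
  iw_count : exists f : iw_L -> nat, forall x y, f x = f y -> x = y;
  iw_idx : iw_L -> nat;
  iw_val : forall p, gcar (G (iw_idx p));
  iw_nontriv : forall p, iw_val p <> gone (G (iw_idx p));
  iw_fin : forall n, exists s : list iw_L, forall p, iw_idx p = n -> In p s }.
Arguments iw_lt {G} i _ _.
Arguments iw_idx {G} i _.
Arguments iw_val {G} i _.

Definition iw_letter G (w : iword G) (p : iw_L w) : letter G :=
  existT _ (iw_idx w p) (iw_val w p).

Definition restr G (w : iword G) (m : nat) (s : list (letter G)) : Prop :=
  exists ps : list (iw_L w),
    StronglySorted (iw_lt w) ps /\
    (forall p, In p ps <-> iw_idx w p < m) /\
    s = map (@iw_letter G w) ps.

(* Equivalence of infinite words (equality in the topologist's product) *)
Definition tp_eq G (w w' : iword G) : Prop :=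
  forall m, exists s s', restr w m s /\ restr w' m s' /\
                         fp_eq (fun n => n < m) s s'.

Definition sum_lt A B (ltA : A -> A -> Prop) (ltB : B -> B -> Prop)
  (x y : A + B) : Prop :=
  match x, y with
  | inl a, inl a' => ltA a a'
  | inr b, inr b' => ltB b b'
  | inl _, inr _ => True
  | inr _, inl _ => False
  end.

Section Cat.
Variables (G : nat -> group) (w1 w2 : iword G).

Definition cat_idx (x : iw_L w1 + iw_L w2) : nat :=
  match x with inl a => iw_idx w1 a | inr b => iw_idx w2 b end.
Definition cat_val (x : iw_L w1 + iw_L w2) : gcar (G (cat_idx x)) :=
  match x as x return gcar (G (cat_idx x)) with
  | inl a => iw_val w1 a | inr b => iw_val w2 b end.

Lemma cat_irrefl x : ~ sum_lt (iw_lt w1) (iw_lt w2) x x.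
Proof. destruct x; simpl; apply iw_irrefl. Qed.
Lemma cat_trans x y z : sum_lt (iw_lt w1) (iw_lt w2) x y ->
  sum_lt (iw_lt w1) (iw_lt w2) y z -> sum_lt (iw_lt w1) (iw_lt w2) x z.
Proof. destruct x, y, z; simpl; try tauto; apply iw_trans. Qed.
Lemma cat_total x y : sum_lt (iw_lt w1) (iw_lt w2) x y \/ x = y \/
  sum_lt (iw_lt w1) (iw_lt w2) y x.
Proof.
  destruct x as [a|b], y as [a'|b']; simpl; auto.
  - destruct (iw_total w1 a a') as [h|[h|h]]; subst; auto.
  - destruct (iw_total w2 b b') as [h|[h|h]]; subst; auto.
Qed.
Lemma cat_count : exists f : iw_L w1 + iw_L w2 -> nat,
  forall x y, f x = f y -> x = y.
Proof.
  destruct (iw_count w1) as [f1 h1], (iw_count w2) as [f2 h2].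
  exists (fun x => match x with inl a => 2 * f1 a | inr b => 2 * f2 b + 1 end).
  intros [a|b] [a'|b'] e.
  - f_equal; apply h1; lia.
  - lia.
  - lia.
  - f_equal; apply h2; lia.
Qed.
Lemma cat_nontriv p : cat_val p <> gone (G (cat_idx p)).
Proof. destruct p; apply iw_nontriv. Qed.
Lemma cat_fin n : exists s : list (iw_L w1 + iw_L w2),
  forall p, cat_idx p = n -> In p s.
Proof.
  destruct (iw_fin w1 n) as [s1 h1], (iw_fin w2 n) as [s2 h2].
  exists (map inl s1 ++ map inr s2). intros [a|b] e; simpl in e;
  apply in_or_app; [left|right]; apply in_map; auto.
Qed.

Definition iw_cat : iword G :=
  @IWord G (iw_L w1 + iw_L w2) (sum_lt (iw_lt w1) (iw_lt w2))
    cat_irrefl cat_trans cat_total cat_count cat_idx cat_val cat_nontriv cat_fin.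
End Cat.

Section Inv.
Variables (G : nat -> group) (w : iword G).
Definition inv_lt (x y : iw_L w) : Prop := iw_lt w y x.
Lemma inv_irrefl x : ~ inv_lt x x.
Proof. apply iw_irrefl. Qed.
Lemma inv_trans x y z : inv_lt x y -> inv_lt y z -> inv_lt x z.
Proof. unfold inv_lt; intros; eapply iw_trans; eauto. Qed.
Lemma inv_total x y : inv_lt x y \/ x = y \/ inv_lt y x.
Proof. unfold inv_lt; destruct (iw_total w x y) as [h|[h|h]]; auto. Qed.
Definition inv_val (p : iw_L w) : gcar (G (iw_idx w p)) := ginv (iw_val w p).
Lemma inv_nontriv p : inv_val p <> gone (G (iw_idx w p)).
Proof. intro h. apply (iw_nontriv w p). apply ginv_eq1. exact h. Qed.
Definition iw_inv : iword G :=
  @IWord G (iw_L w) inv_lt inv_irrefl inv_trans inv_total (iw_count w)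
    (iw_idx w) inv_val inv_nontriv (iw_fin w).
End Inv.

Section Empty.
Variable G : nat -> group.
Definition empty_idx (x : Empty_set) : nat := match x with end.
Definition empty_val (x : Empty_set) : gcar (G (empty_idx x)) :=
  match x with end.
Lemma empty_count : exists f : Empty_set -> nat, forall x y, f x = f y -> x = y.
Proof. exists empty_idx. intros []. Qed.
Lemma empty_nontriv (p : Empty_set) : empty_val p <> gone (G (empty_idx p)).
Proof. destruct p. Qed.
Lemma empty_fin (n : nat) : exists s : list Empty_set,
  forall p : Empty_set, empty_idx p = n -> In p s.
Proof. exists nil. intros []. Qed.
Lemma empty_irrefl (x : Empty_set) : ~ False.
Proof. auto. Qed.
Lemma empty_trans (x y z : Empty_set) : False -> False -> False.
Proof. auto. Qed.
Lemma empty_total (x y : Empty_set) : False \/ x = y \/ False.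
Proof. destruct x. Qed.
Definition iw_empty : iword G :=
  @IWord G Empty_set (fun _ _ => False) empty_irrefl empty_trans empty_total
    empty_count empty_idx empty_val empty_nontriv empty_fin.
End Empty.

(* classes of finite words = the free product *_n G_n inside the topologist's
   product *)
Definition is_finite_word G (w : iword G) : Prop :=
  exists s : list (iw_L w), forall p, In p s.

Fixpoint conj_prod G (l : list (iword G * iword G)) : iword G :=
  match l with
  | [] => iw_empty G
  | (g, f) :: l' => iw_cat (iw_cat (iw_cat g f) (iw_inv g)) (conj_prod l')
  end.

(* the class of w lies in the normal closure of *_n G_n *)
Definition in_ncl G (w : iword G) : Prop :=
  exists l : list (iword G * iword G),
    Forall (fun gf => is_finite_word (snd gf)) l /\ tp_eq w (conj_prod l).

(* equality in the archipelago group A(G_n) *)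
Definition arch_eq G (w w' : iword G) : Prop := in_ncl (iw_cat w (iw_inv w')).

(* A(G_n) embeds in A(H_n): an injective group homomorphism, given on
   representatives *)
Definition arch_embeds (G H : nat -> group) : Prop :=
  exists f : iword G -> iword H,
    (forall w w', arch_eq w w' -> arch_eq (f w) (f w')) /\
    (forall w w', arch_eq (f (iw_cat w w')) (iw_cat (f w) (f w'))) /\
    (forall w w', arch_eq (f w) (f w') -> arch_eq w w').

Definition finite_partition (P : nat -> list nat) : Prop :=
  (forall n, P n <> []) /\ (forall i, exists! n, In i (P n)).

(* phi is an injective homomorphism G0 -> *_{i in S} H_i, given on
   representatives (finite words with letters from H_i, i in S) *)
Definition inj_hom_to_fp (G0 : group) (H : nat -> group) (S : nat -> Prop)
  (phi : G0 -> list (letter H)) : Prop :=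
  (forall x, Forall (fun l => S (projT1 l)) (phi x)) /\
  (forall x y, fp_eq S (phi (gmul x y)) (phi x ++ phi y)) /\
  (forall x y, fp_eq S (phi x) (phi y) -> x = y).

(* Replace each letter g of G_n by (a representative of) phi_n(g), a finite word in the groups
   H_i, i in P_n.  As the blocks P_n are finite and disjoint, this sends infinite words to
   infinite words and commutes with restricting to finitely many groups, so it is a
   homomorphism of topologist's products.  An element lies in the normal closure of the free
   product iff, for some N, its restrictions to the groups of index >= N are all trivial.  This
   tail condition passes from w to its image because blocks of index < N contain only finitely
   many indices, and back because the substitution is injective on free products: it maps
   reduced words to reduced words. *)
From Stdlib Require Import List Relations Sorting.Sorted Arith Lia Setoid Morphisms
  Cantor ClassicalEpsilon Eqdep_dec Bool.
Import ListNotations.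
Set Implicit Arguments.

Definition asbool (P : Prop) : bool :=
  if excluded_middle_informative P then true else false.

Lemma asboolT (P : Prop) : asbool P = true <-> P.
Proof. unfold asbool; destruct excluded_middle_informative; intuition discriminate. Qed.

Lemma asboolF (P : Prop) : asbool P = false <-> ~ P.
Proof. unfold asbool; destruct excluded_middle_informative; intuition discriminate. Qed.

Lemma clos_rst_map A B (R : relation A) (R' : relation B) `{Equivalence B R'} (f : A -> B) :
  (forall x y, R x y -> R' (f x) (f y)) ->
  forall x y, clos_refl_sym_trans A R x y -> R' (f x) (f y).
Proof.
  intros hf x y h; induction h.
  - apply hf; assumption.
  - reflexivity.
  - symmetry; assumption.
  - etransitivity; eassumption.
Qed.

Section GroupTheory.
Variable K : group.
Implicit Types x y z : K.

Lemma gmulI x y z : gmul x y = gmul x z -> y = z.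
Proof.
  intro e. rewrite <- (gmul1g _ y), <- (gmul1g _ z), <- (gmulVg _ x), <- !gmulA, e.
  reflexivity.
Qed.

Lemma gmulgV x : gmul x (ginv x) = gone K.
Proof.
  rewrite <- (gmul1g _ (gmul x (ginv x))), <- (gmulVg _ (ginv x)) at 1.
  rewrite <- gmulA, (gmulA _ (ginv x) x), gmulVg, gmul1g. apply gmulVg.
Qed.

Lemma gmulg1 x : gmul x (gone K) = x.
Proof. rewrite <- (gmulVg _ x), gmulA, gmulgV, gmul1g. reflexivity. Qed.

Lemma ginvM x y : ginv (gmul x y) = gmul (ginv y) (ginv x).
Proof.
  apply (gmulI (gmul x y)). rewrite gmulgV.
  rewrite gmulA, <- (gmulA _ x y), gmulgV, gmulg1, gmulgV. reflexivity.
Qed.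

Lemma ginv1 : ginv (gone K) = gone K.
Proof. rewrite <- (gmulg1 (ginv (gone K))). apply gmulVg. Qed.

Lemma ginvK x : ginv (ginv x) = x.
Proof. apply (gmulI (ginv x)). rewrite gmulVg, gmulgV. reflexivity. Qed.
End GroupTheory.

(** * Finite words and free products *)

Notation fp_eq_all := (fp_eq (fun _ => True)).

Section Words.
Variable K : nat -> group.
Implicit Types (S : nat -> Prop) (s t u : list (letter K)).

Definition word_on S s : Prop := Forall (fun l => S (projT1 l)) s.

Definition linv (l : letter K) : letter K := existT _ (projT1 l) (ginv (projT2 l)).
Definition word_inv s : list (letter K) := rev (map linv s).

Lemma word_inv_app s t : word_inv (s ++ t) = word_inv t ++ word_inv s.
Proof. unfold word_inv. rewrite map_app, rev_app_distr. reflexivity. Qed.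

Lemma word_inv_cons x s : word_inv (x :: s) = word_inv s ++ [linv x].
Proof. reflexivity. Qed.

Lemma word_invK s : word_inv (word_inv s) = s.
Proof.
  unfold word_inv. rewrite map_rev, rev_involutive, map_map.
  rewrite <- map_id. apply map_ext. intros [n g]. unfold linv; cbn. rewrite ginvK. reflexivity.
Qed.

Lemma word_on_inv S s : word_on S s -> word_on S (word_inv s).
Proof. intro h. apply Forall_rev, Forall_map. exact h. Qed.

Lemma word_on_all s : word_on (fun _ => True) s.
Proof. apply Forall_forall. auto. Qed.

Definition wfilter (q : nat -> bool) s : list (letter K) := filter (fun l => q (projT1 l)) s.

Lemma wfilter_app q s t : wfilter q (s ++ t) = wfilter q s ++ wfilter q t.
Proof. apply filter_app. Qed.

Lemma wfilter_inv q s : wfilter q (word_inv s) = word_inv (wfilter q s).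
Proof. unfold wfilter, word_inv. rewrite filter_rev, filter_map_swap. reflexivity. Qed.

Lemma wfilter_wfilter q r s : wfilter q (wfilter r s) = wfilter (fun n => q n && r n) s.
Proof.
  unfold wfilter in *. induction s as [|x s IH]; [reflexivity|]. cbn.
  destruct (r (projT1 x)) eqn:e1, (q (projT1 x)) eqn:e2; cbn; rewrite ?e2, ?IH; reflexivity.
Qed.

Lemma wfilter_absorb q r s :
  (forall n, q n = true -> r n = true) -> wfilter q (wfilter r s) = wfilter q s.
Proof.
  intro h. rewrite wfilter_wfilter. apply filter_ext. intro x.
  destruct (q (projT1 x)) eqn:e; [rewrite (h _ e)|]; reflexivity.
Qed.

Lemma wfilter_id q s : (forall x, In x s -> q (projT1 x) = true) -> wfilter q s = s.
Proof.
  intro h. unfold wfilter. rewrite (filter_ext_in _ (fun _ => true)) by auto.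
  apply filter_true.
Qed.

Lemma wfilter_nil q s : (forall x, In x s -> q (projT1 x) = false) -> wfilter q s = [].
Proof.
  intro h. unfold wfilter. rewrite (filter_ext_in _ (fun _ => false)) by auto.
  apply filter_false.
Qed.

Lemma word_on_filter S (f : letter K -> bool) s : word_on S s -> word_on S (filter f s).
Proof.
  unfold word_on. rewrite !Forall_forall. intros h x hx. apply filter_In in hx. apply h, hx.
Qed.

#[global] Instance fp_eq_equiv S : Equivalence (@fp_eq K S).
Proof. split; red; [apply rst_refl|apply rst_sym|apply rst_trans]. Qed.

Lemma fp_step_ctx S s t u v : fp_step K S s t -> fp_step K S (u ++ s ++ v) (u ++ t ++ v).
Proof.
  destruct 1; rewrite <- !app_assoc, !(app_assoc u); cbn; constructor; assumption.
Qed.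

Lemma fp_eq_ctx S s t u v : fp_eq S s t -> fp_eq S (u ++ s ++ v) (u ++ t ++ v).
Proof.
  apply (clos_rst_map (fun x => u ++ x ++ v)).
  intros; apply rst_step, fp_step_ctx; assumption.
Qed.

#[global] Instance app_fp_eq S : Proper (@fp_eq K S ==> @fp_eq K S ==> @fp_eq K S) (@app _).
Proof.
  intros s s' hs t t' ht. transitivity (s' ++ t).
  - exact (fp_eq_ctx [] t hs).
  - pose proof (fp_eq_ctx s' [] ht) as h. rewrite !app_nil_r in h. exact h.
Qed.

#[global] Instance cons_fp_eq S x : Proper (@fp_eq K S ==> @fp_eq K S) (cons x).
Proof. intros s t h. pose proof (fp_eq_ctx [x] [] h) as e. rewrite !app_nil_r in e. exact e. Qed.

Lemma fp_eq_mono S S' s t : (forall n, S n -> S' n) -> fp_eq S s t -> fp_eq S' s t.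
Proof.
  intros hS. apply (clos_rst_map id). intros x y [] ; apply rst_step; constructor; auto.
Qed.

Lemma fp_eq_cancel_r S s : word_on S s -> fp_eq S (s ++ word_inv s) [].
Proof.
  induction s as [|x s IH]; intro hs; [reflexivity|]. inversion_clear hs as [|? ? hx hs'].
  replace ((x :: s) ++ word_inv (x :: s)) with ([x] ++ (s ++ word_inv s) ++ [linv x])
    by (rewrite word_inv_cons; cbn; rewrite !app_assoc; reflexivity).
  rewrite IH by assumption. destruct x as [n g]; cbn.
  transitivity [existT (fun k => gcar (K k)) n (gmul g (ginv g))].
  { apply rst_step, (fps_merge K S [] [] n g (ginv g)). }
  rewrite gmulgV. apply rst_step, (fps_drop K S [] [] n). assumption.
Qed.

Lemma fp_eq_cancel_l S s : word_on S s -> fp_eq S (word_inv s ++ s) [].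
Proof.
  intro h. rewrite <- (word_invK s) at 2. apply fp_eq_cancel_r, word_on_inv, h.
Qed.

#[global] Instance word_inv_fp_eq S : Proper (@fp_eq K S ==> @fp_eq K S) word_inv.
Proof.
  intros s t.
  apply (clos_rst_map word_inv). intros x y []; apply rst_step;
    rewrite !word_inv_app, ?word_inv_cons, <- ?app_assoc; cbn; unfold linv; cbn.
  - rewrite ginvM. apply fps_merge.
  - rewrite ginv1. constructor; assumption.
Qed.

Lemma fp_eq_wfilter S q s t :
  fp_eq S s t -> fp_eq (fun n => S n /\ q n = true) (wfilter q s) (wfilter q t).
Proof.
  apply (clos_rst_map (wfilter q)). intros x y []; rewrite !wfilter_app; cbn.
  - destruct (q n); cbn; [apply rst_step, fps_merge|reflexivity].
  - destruct (q n) eqn:e; cbn; [apply rst_step; constructor; auto|reflexivity].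
Qed.

Lemma fp_eq_all_of S s t : fp_eq S s t -> fp_eq_all s t.
Proof. apply fp_eq_mono. auto. Qed.

#[global] Instance wfilter_fp_eq q : Proper (fp_eq_all ==> fp_eq_all) (wfilter q).
Proof. intros s t h. apply (fp_eq_all_of (fp_eq_wfilter q h)). Qed.
End Words.

(** * Reduced words *)

Section NormalForm.
Variable K : nat -> group.
Implicit Types (S : nat -> Prop) (s t w : list (letter K)).

Definition nontriv (x : letter K) : Prop := projT2 x <> gone (K (projT1 x)).

Definition head_differs (x : letter K) w : Prop :=
  match w with [] => True | y :: _ => projT1 x <> projT1 y end.

Fixpoint reduced w : Prop :=
  match w with [] => True | x :: w' => nontriv x /\ head_differs x w' /\ reduced w' end.

(* [nf_cons x w] is the reduced form of [x :: w] when [w] is reduced. *)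
Definition nf_cons (x : letter K) w : list (letter K) :=
  match w with
  | [] => if excluded_middle_informative (projT2 x = gone _) then [] else [x]
  | y :: w' =>
     match Nat.eq_dec (projT1 y) (projT1 x) with
     | left e =>
        let g := gmul (projT2 x) (eq_rect _ (fun n => gcar (K n)) (projT2 y) _ e) in
        if excluded_middle_informative (g = gone _) then w' else existT _ (projT1 x) g :: w'
     | right _ => if excluded_middle_informative (projT2 x = gone _) then w else x :: w
     end
  end.

Definition nf s : list (letter K) := fold_right nf_cons [] s.

Lemma nf_cons_same n (g h : K n) w :
  nf_cons (existT _ n g) (existT _ n h :: w) =
  if excluded_middle_informative (gmul g h = gone (K n)) then w
  else existT _ n (gmul g h) :: w.
Proof.
  unfold nf_cons; cbn [projT1 projT2]. destruct (Nat.eq_dec n n) as [e|e]; [|congruence].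
  rewrite (UIP_refl_nat n e). reflexivity.
Qed.

Lemma nf_cons_other n (g : K n) w :
  head_differs (existT _ n g) w ->
  nf_cons (existT _ n g) w =
  if excluded_middle_informative (g = gone (K n)) then w else existT _ n g :: w.
Proof.
  destruct w as [|[m h] w]; [reflexivity|]. intro hne. cbn in hne.
  unfold nf_cons; cbn [projT1 projT2].
  destruct (Nat.eq_dec m n); [congruence|reflexivity].
Qed.

Lemma head_differs_tail n (g h : K n) w :
  reduced (existT _ n h :: w) -> head_differs (existT _ n g) w.
Proof. destruct w as [|[]]; cbn; tauto. Qed.

Lemma reduced_nf_cons x w : reduced w -> reduced (nf_cons x w).
Proof.
  destruct x as [n g]. intro hw. destruct w as [|[m h] w].
  - cbn. destruct excluded_middle_informative; cbn; auto.
  - destruct (Nat.eq_dec m n) as [e|e].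
    + subst m. rewrite nf_cons_same. pose proof (head_differs_tail (gmul g h) hw).
      destruct hw as [_ [_ hw]]. destruct excluded_middle_informative; cbn; auto.
    + rewrite nf_cons_other by (cbn; congruence).
      destruct excluded_middle_informative; cbn; auto.
Qed.

Lemma nf_cons_merge n (g h : K n) w : reduced w ->
  nf_cons (existT _ n g) (nf_cons (existT _ n h) w) = nf_cons (existT _ n (gmul g h)) w.
Proof.
  intro hw.
  assert (other : head_differs (existT _ n h) w ->
     nf_cons (existT _ n g) (nf_cons (existT _ n h) w) = nf_cons (existT _ n (gmul g h)) w).
  { intro hd. assert (hd' : forall k, head_differs (existT _ n k) w)
      by (intro; destruct w as [|[]]; exact hd).
    rewrite (@nf_cons_other n h w hd), (@nf_cons_other n (gmul g h) w (hd' _)).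
    destruct (excluded_middle_informative (h = gone (K n))) as [E|E].
    - subst h. rewrite gmulg1, (@nf_cons_other n g w (hd' _)). reflexivity.
    - rewrite nf_cons_same. reflexivity. }
  destruct w as [|[m k] w]; [apply other; exact I|].
  destruct (Nat.eq_dec m n) as [e|e]; [|apply other; cbn; congruence].
  subst m. rewrite !nf_cons_same.
  destruct (excluded_middle_informative (gmul h k = gone (K n))) as [E|E].
  - rewrite nf_cons_other by exact (head_differs_tail _ hw).
    rewrite <- gmulA, E, gmulg1. reflexivity.
  - rewrite nf_cons_same, gmulA. reflexivity.
Qed.

Lemma nf_cons_one n w : reduced w -> nf_cons (existT _ n (gone (K n))) w = w.
Proof.
  intro hw. destruct w as [|[m k] w].
  - cbn. destruct excluded_middle_informative; congruence.
  - destruct (Nat.eq_dec m n) as [e|e].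
    + subst m. rewrite nf_cons_same, gmul1g. destruct hw as [hk _].
      destruct excluded_middle_informative; [contradiction|reflexivity].
    + rewrite nf_cons_other by (cbn; congruence).
      destruct excluded_middle_informative; congruence.
Qed.

Lemma reduced_nf s : reduced (nf s).
Proof. induction s; cbn; auto. apply reduced_nf_cons; auto. Qed.

Lemma nf_app s t : nf (s ++ t) = fold_right nf_cons (nf t) s.
Proof. apply fold_right_app. Qed.

Lemma nf_fp_eq S s t : fp_eq S s t -> nf s = nf t.
Proof.
  apply (clos_rst_map nf). intros x y []; rewrite !nf_app; f_equal; cbn.
  - apply nf_cons_merge, reduced_nf.
  - apply nf_cons_one, reduced_nf.
Qed.

Lemma nf_id w : reduced w -> nf w = w.
Proof.
  induction w as [|[n g] w IH]; [reflexivity|]. intros [hg [hd hw]].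
  change (nf_cons (existT _ n g) (nf w) = existT _ n g :: w).
  rewrite IH, nf_cons_other by assumption.
  destruct excluded_middle_informative; [contradiction|reflexivity].
Qed.

Lemma fp_eq_nf_cons S x w : S (projT1 x) -> reduced w -> fp_eq S (x :: w) (nf_cons x w).
Proof.
  destruct x as [n g]; cbn. intros hS hw.
  assert (other : head_differs (existT _ n g) w ->
    fp_eq S (existT _ n g :: w) (nf_cons (existT _ n g) w)).
  { intro hd. rewrite nf_cons_other by assumption.
    destruct excluded_middle_informative as [E|E]; [|reflexivity].
    subst g. apply rst_step, (fps_drop K S [] w n). assumption. }
  destruct w as [|[m k] w]; [apply other; exact I|].
  destruct (Nat.eq_dec m n) as [e|e]; [|apply other; cbn; congruence].
  subst m. rewrite nf_cons_same.
  transitivity (existT _ n (gmul g k) :: w).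
  { apply rst_step, (fps_merge K S [] w n g k). }
  destruct excluded_middle_informative as [E|E]; [|reflexivity].
  rewrite E. apply rst_step, (fps_drop K S [] w n). assumption.
Qed.

Lemma fp_eq_nf S s : word_on S s -> fp_eq S s (nf s).
Proof.
  induction s as [|x s IH]; intro hs; [reflexivity|]. inversion_clear hs as [|? ? hx hs'].
  transitivity (x :: nf s).
  - rewrite <- (IH hs'). reflexivity.
  - apply fp_eq_nf_cons; [assumption|apply reduced_nf].
Qed.

Lemma fp_eq_restrict S s t : word_on S s -> word_on S t -> fp_eq_all s t -> fp_eq S s t.
Proof.
  intros hs ht e. rewrite (fp_eq_nf hs), (fp_eq_nf ht), (nf_fp_eq e). reflexivity.
Qed.

Lemma word_on_nf_cons S x w : S (projT1 x) -> word_on S w -> word_on S (nf_cons x w).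
Proof.
  destruct x as [n g]; cbn. intros hx hw. destruct w as [|[m k] w].
  - cbn. destruct excluded_middle_informative; repeat constructor; auto.
  - inversion_clear hw as [|? ? hk hw']. destruct (Nat.eq_dec m n) as [e|e].
    + subst m. rewrite nf_cons_same. destruct excluded_middle_informative; auto; constructor; auto.
    + rewrite nf_cons_other by (cbn; congruence).
      destruct excluded_middle_informative; repeat constructor; auto.
Qed.

Lemma word_on_nf S s : word_on S s -> word_on S (nf s).
Proof.
  induction s as [|x s IH]; intro h; [constructor|]. inversion_clear h.
  apply word_on_nf_cons; auto.
Qed.

Lemma reduced_app s t : reduced s -> reduced t -> (forall x, In x s -> head_differs x t) ->
  reduced (s ++ t).
Proof.
  induction s as [|x s IH]; cbn; auto. intros [h1 [h2 h3]] ht hx.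
  repeat split; auto.
  destruct s; cbn; [apply hx; auto|exact h2].
Qed.
End NormalForm.

Lemma fp_eq_filter_nontriv K S (s : list (letter K)) :
  word_on S s -> fp_eq S (filter (fun y => asbool (nontriv y)) s) s.
Proof.
  induction s as [|x s IH]; intro hs; [reflexivity|]. inversion_clear hs as [|? ? hx hs'].
  cbn. destruct (asbool (nontriv x)) eqn:e; rewrite IH by assumption; [reflexivity|].
  apply asboolF in e. destruct x as [n g]. unfold nontriv in e; cbn in e.
  apply NNPP in e. subst g. symmetry. apply rst_step, (fps_drop K S [] s n). assumption.
Qed.

(** * Substituting words for letters *)

Section InjectiveHom.
Variables (G0 : group) (H : nat -> group) (S : nat -> Prop) (phi : G0 -> list (letter H)).
Hypothesis hphi : @inj_hom_to_fp G0 H S phi.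

Lemma inj_hom_on x : word_on S (phi x).
Proof. apply (proj1 hphi). Qed.

Lemma inj_hom_mul x y : fp_eq S (phi (gmul x y)) (phi x ++ phi y).
Proof. apply (proj1 (proj2 hphi)). Qed.

Lemma inj_hom_one : fp_eq S (phi (gone G0)) [].
Proof.
  set (a := phi (gone G0)).
  assert (e : fp_eq S a (a ++ a)) by (unfold a; rewrite <- inj_hom_mul, gmul1g; reflexivity).
  transitivity ((word_inv a ++ a) ++ a).
  - rewrite fp_eq_cancel_l by apply inj_hom_on. reflexivity.
  - rewrite <- app_assoc, <- e. apply fp_eq_cancel_l, inj_hom_on.
Qed.

Lemma inj_hom_inv x : fp_eq S (phi (ginv x)) (word_inv (phi x)).
Proof.
  transitivity (phi (ginv x) ++ phi x ++ word_inv (phi x)).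
  - rewrite fp_eq_cancel_r by apply inj_hom_on. rewrite app_nil_r. reflexivity.
  - rewrite app_assoc, <- inj_hom_mul, gmulVg, inj_hom_one. reflexivity.
Qed.
End InjectiveHom.

Section Partition.
Variable P : nat -> list nat.
Hypothesis hP : finite_partition P.

Lemma partition_block_unique i n n' : In i (P n) -> In i (P n') -> n = n'.
Proof.
  intros h h'. destruct (proj2 hP i) as [k [_ hk]]. rewrite <- (hk n h), <- (hk n' h'). reflexivity.
Qed.

Lemma partition_blocks_bounded N :
  exists N', forall n i, n < N -> In i (P n) -> i < N'.
Proof.
  induction N as [|N [N' h]]; [exists 0; intros; lia|].
  exists (N' + S (list_max (P N))). intros n i hn hi.
  destruct (Nat.eq_dec n N) as [->|ne]; [|specialize (h n i ltac:(lia) hi); lia].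
  enough (i <= list_max (P N)) by lia.
  exact (proj1 (Forall_forall _ _) (proj1 (list_max_le _ _) (le_n _)) i hi).
Qed.

Lemma partition_index_bounded m :
  exists M, forall n i, In i (P n) -> i < m -> n < M.
Proof.
  induction m as [|m [M h]]; [exists 0; intros; lia|].
  destruct (proj2 hP m) as [n0 [h0 _]]. exists (M + S n0). intros n i hi him.
  destruct (Nat.eq_dec i m) as [->|ne].
  - rewrite (partition_block_unique m n n0 hi h0). lia.
  - specialize (h n i hi ltac:(lia)). lia.
Qed.

Lemma block_selector (sel : nat -> bool) :
  exists q : nat -> bool, forall n i, In i (P n) -> q i = sel n.
Proof.
  exists (fun i => asbool (exists n, In i (P n) /\ sel n = true)). intros n i hi.
  destruct (sel n) eqn:e; [apply asboolT; eauto|].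
  apply asboolF. intros [n' [hi' e']].
  rewrite (partition_block_unique i n n' hi hi') in e. congruence.
Qed.
End Partition.

Section Substitution.
Variables (G H : nat -> group) (P : nat -> list nat) (phi : forall n, G n -> list (letter H)).
Hypothesis hP : finite_partition P.
Hypothesis hphi : forall n, @inj_hom_to_fp (G n) H (fun i => In i (P n)) (phi n).
Implicit Types (l : letter G) (s r : list (letter G)).

(* Trivial letters are dropped because the letters of an infinite word must be nontrivial. *)
Definition subst_letter l : list (letter H) :=
  filter (fun y => asbool (nontriv y)) (phi (projT1 l) (projT2 l)).

Definition subst_word s : list (letter H) := flat_map subst_letter s.

Lemma subst_word_app s r : subst_word (s ++ r) = subst_word s ++ subst_word r.
Proof. apply flat_map_app. Qed.

Lemma subst_letter_on l : word_on (fun i => In i (P (projT1 l))) (subst_letter l).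
Proof. apply word_on_filter, inj_hom_on, hphi. Qed.

Lemma subst_letter_nontriv l y : In y (subst_letter l) -> nontriv y.
Proof. unfold subst_letter. rewrite filter_In, asboolT. tauto. Qed.

Lemma subst_letter_phi n (g : G n) :
  fp_eq (fun i => In i (P n)) (subst_letter (existT _ n g)) (phi n g).
Proof. apply fp_eq_filter_nontriv, inj_hom_on, hphi. Qed.

Lemma subst_letter_inv l :
  fp_eq_all (subst_letter (linv l)) (word_inv (subst_letter l)).
Proof.
  destruct l as [n g]. unfold linv; cbn [projT1 projT2].
  apply (fp_eq_all_of (S := fun i => In i (P n))).
  rewrite !subst_letter_phi, inj_hom_inv by apply hphi. reflexivity.
Qed.

Lemma subst_word_inv s : fp_eq_all (subst_word (word_inv s)) (word_inv (subst_word s)).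
Proof.
  induction s as [|x s IH]; [reflexivity|].
  rewrite word_inv_cons, subst_word_app. cbn [subst_word flat_map]. rewrite word_inv_app, IH.
  cbn. rewrite app_nil_r, subst_letter_inv. reflexivity.
Qed.

Lemma subst_word_fp_eq S s r : fp_eq S s r -> fp_eq_all (subst_word s) (subst_word r).
Proof.
  apply (clos_rst_map subst_word). intros x y []; rewrite !subst_word_app;
    cbn [subst_word flat_map]; apply (fp_eq_all_of (S := fun i => In i (P n))).
  - rewrite !subst_letter_phi, inj_hom_mul by apply hphi. rewrite <- !app_assoc. reflexivity.
  - rewrite subst_letter_phi, inj_hom_one by apply hphi. reflexivity.
Qed.

Lemma wfilter_subst_letter q l :
  (forall i, In i (P (projT1 l)) -> q i = true) -> wfilter q (subst_letter l) = subst_letter l.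
Proof.
  intro h. apply wfilter_id. intros y hy. apply h.
  exact (proj1 (Forall_forall _ _) (subst_letter_on l) y hy).
Qed.

Lemma wfilter_subst_letter_nil q l :
  (forall i, In i (P (projT1 l)) -> q i = false) -> wfilter q (subst_letter l) = [].
Proof.
  intro h. apply wfilter_nil. intros y hy. apply h.
  exact (proj1 (Forall_forall _ _) (subst_letter_on l) y hy).
Qed.

Lemma wfilter_subst_word q q' s :
  (forall n i, In i (P n) -> q i = q' n) -> wfilter q (subst_word s) = subst_word (wfilter q' s).
Proof.
  intro hq. induction s as [|x s IH]; [reflexivity|].
  change (wfilter q (subst_letter x ++ subst_word s) =
          subst_word (if q' (projT1 x) then x :: wfilter q' s else wfilter q' s)).
  rewrite wfilter_app, IH. destruct (q' (projT1 x)) eqn:e.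
  - rewrite wfilter_subst_letter; [reflexivity|]. intros i hi. rewrite (hq _ _ hi). exact e.
  - rewrite wfilter_subst_letter_nil; [reflexivity|]. intros i hi. rewrite (hq _ _ hi). exact e.
Qed.

Lemma wfilter_subst_word_drop (q r : nat -> bool) s :
  (forall n i, In i (P n) -> r n = false -> q i = false) ->
  wfilter q (subst_word s) = wfilter q (subst_word (wfilter r s)).
Proof.
  intro h. induction s as [|x s IH]; [reflexivity|].
  change (wfilter q (subst_letter x ++ subst_word s) =
          wfilter q (subst_word (if r (projT1 x) then x :: wfilter r s else wfilter r s))).
  rewrite wfilter_app, IH. destruct (r (projT1 x)) eqn:e.
  - cbn [subst_word flat_map]. rewrite wfilter_app. reflexivity.
  - rewrite wfilter_subst_letter_nil; [reflexivity|]. intros i hi. exact (h _ _ hi e).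
Qed.

Definition subst_nf l : list (letter H) := nf (subst_letter l).

Lemma subst_nf_on l : word_on (fun i => In i (P (projT1 l))) (subst_nf l).
Proof. apply word_on_nf, subst_letter_on. Qed.

Lemma subst_nf_nonempty l : nontriv l -> subst_nf l <> [].
Proof.
  destruct l as [n g]. unfold nontriv; cbn. intros hg he. apply hg.
  apply (proj2 (proj2 (hphi n))).
  rewrite <- subst_letter_phi, (fp_eq_nf (subst_letter_on _)), inj_hom_one by apply hphi.
  fold (subst_nf (existT _ n g)). rewrite he. reflexivity.
Qed.

Definition starts_in n (w : list (letter H)) : Prop :=
  match w with [] => False | y :: _ => In (projT1 y) (P n) end.

(* Consecutive letters of a reduced word come from different groups [G n], so their images
   lie in disjoint blocks and cannot interact. *)
Lemma reduced_subst_nf_cons l r :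
  reduced (l :: r) ->
  reduced (flat_map subst_nf (l :: r)) /\ starts_in (projT1 l) (flat_map subst_nf (l :: r)).
Proof.
  revert l. induction r as [|l' r IH]; intros l [hl [hd hr]].
  - cbn. rewrite app_nil_r. split; [apply reduced_nf|].
    pose proof (subst_nf_on l) as hs. destruct (subst_nf l) as [|y t] eqn:e.
    + contradiction (subst_nf_nonempty hl e).
    + inversion hs; assumption.
  - destruct (IH l' hr) as [hr' hs'].
    change (flat_map subst_nf (l :: l' :: r)) with (subst_nf l ++ flat_map subst_nf (l' :: r)).
    destruct (flat_map subst_nf (l' :: r)) as [|u t]; [contradiction|]. split.
    + apply reduced_app; [apply reduced_nf|exact hr'|]. intros y hy e. apply hd.
      apply (partition_block_unique hP (projT1 y)); [|rewrite e; exact hs'].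
      exact (proj1 (Forall_forall _ _) (subst_nf_on l) y hy).
    + pose proof (subst_nf_on l) as hs. destruct (subst_nf l) as [|y t'] eqn:e.
      * contradiction (subst_nf_nonempty hl e).
      * inversion hs; assumption.
Qed.

Lemma reduced_subst_nf r : reduced r -> reduced (flat_map subst_nf r).
Proof. destruct r as [|l r]; [constructor|]. intro h. apply (reduced_subst_nf_cons h). Qed.

Lemma subst_nf_word_fp_eq r : fp_eq_all (flat_map subst_nf r) (subst_word r).
Proof.
  induction r as [|x r IH]; [reflexivity|]. cbn [flat_map subst_word]. fold (subst_word r).
  rewrite IH. apply (fp_eq_all_of (S := fun i => In i (P (projT1 x)))).
  unfold subst_nf. rewrite <- fp_eq_nf by apply subst_letter_on. reflexivity.
Qed.

Lemma subst_word_trivial s : fp_eq_all (subst_word s) [] -> fp_eq_all s [].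
Proof.
  intro hT. rewrite (fp_eq_nf (word_on_all s)).
  assert (e : fp_eq_all (flat_map subst_nf (nf s)) []).
  { rewrite subst_nf_word_fp_eq, <- (subst_word_fp_eq (fp_eq_nf (word_on_all s))). exact hT. }
  pose proof (reduced_nf s) as hr. set (r := nf s) in *. clearbody r.
  apply nf_fp_eq in e. rewrite nf_id in e by apply reduced_subst_nf, hr.
  destruct r as [|l r']; [reflexivity|]. exfalso.
  destruct (reduced_subst_nf_cons hr) as [_ h]. rewrite e in h. exact h.
Qed.
End Substitution.

(** * Restrictions of infinite words *)

Section Sorting.
Variables (A B : Type) (R : A -> A -> Prop).

Lemma StronglySorted_app (l1 l2 : list A) : StronglySorted R l1 -> StronglySorted R l2 ->
  (forall x y, In x l1 -> In y l2 -> R x y) -> StronglySorted R (l1 ++ l2).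
Proof.
  induction l1 as [|x l1 IH]; cbn; auto. intros h1 h2 h. apply StronglySorted_inv in h1 as [h1 hx].
  constructor; [apply IH; auto|]. apply Forall_app. split; [exact hx|].
  apply Forall_forall. intros; apply h; auto.
Qed.

Lemma StronglySorted_map (f : B -> A) (l : list B) :
  StronglySorted R (map f l) <-> StronglySorted (fun a b => R (f a) (f b)) l.
Proof.
  induction l as [|x l IH]; cbn; split; intro h; constructor;
    apply StronglySorted_inv in h as [h hx]; try apply IH, h; rewrite ?Forall_map in *; exact hx.
Qed.

Lemma StronglySorted_filter (q : A -> bool) l : StronglySorted R l -> StronglySorted R (filter q l).
Proof.
  induction l as [|x l IH]; cbn; intro h; auto. apply StronglySorted_inv in h as [h hx].
  destruct (q x); auto. constructor; auto.
  rewrite Forall_forall in *. intros y hy. apply filter_In in hy. apply hx, hy.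
Qed.

Lemma StronglySorted_impl (R' : A -> A -> Prop) l :
  (forall x y, R x y -> R' x y) -> StronglySorted R l -> StronglySorted R' l.
Proof. intros h. induction 1; constructor; auto. eapply Forall_impl; [|eassumption]. auto. Qed.

Hypothesis R_irrefl : forall x, ~ R x x.
Hypothesis R_trans : forall x y z, R x y -> R y z -> R x z.

Lemma StronglySorted_unique l l' : StronglySorted R l -> StronglySorted R l' ->
  (forall x, In x l <-> In x l') -> l = l'.
Proof.
  revert l'. induction l as [|x l IH]; intros [|y l'] h h' e.
  - reflexivity.
  - destruct (proj2 (e y) (or_introl eq_refl)).
  - destruct (proj1 (e x) (or_introl eq_refl)).
  - apply StronglySorted_inv in h as [h hx], h' as [h' hy]. rewrite Forall_forall in hx, hy.
    assert (exy : x = y).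
    { destruct (proj1 (e x) (or_introl eq_refl)) as [?|ix]; auto.
      destruct (proj2 (e y) (or_introl eq_refl)) as [?|iy]; auto.
      destruct (R_irrefl (R_trans (hx y iy) (hy x ix))). }
    subst y. f_equal. apply IH; auto. intro z. specialize (e z); cbn in e.
    split; intro hz.
    + destruct (proj1 e (or_intror hz)) as [<-|?]; auto. destruct (R_irrefl (hx x hz)).
    + destruct (proj2 e (or_intror hz)) as [<-|?]; auto. destruct (R_irrefl (hy x hz)).
Qed.

Lemma filter_orb_sorted (f g : A -> bool) l : StronglySorted R l ->
  (forall x y, In x l -> In y l -> f x = true -> g y = true -> R x y) ->
  filter (fun x => f x || g x) l = filter f l ++ filter g l.
Proof.
  induction l as [|x l IH]; intros h hfg; [reflexivity|].
  apply StronglySorted_inv in h as [h hx]. rewrite Forall_forall in hx.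
  assert (hfg' : forall a b, In a l -> In b l -> f a = true -> g b = true -> R a b)
    by (intros; apply hfg; cbn; auto).
  cbn. rewrite IH by assumption.
  destruct (f x) eqn:ef; cbn.
  - destruct (g x) eqn:eg; [|reflexivity].
    destruct (R_irrefl (hfg x x (or_introl eq_refl) (or_introl eq_refl) ef eg)).
  - destruct (g x) eqn:eg; [|reflexivity].
    rewrite (filter_ext_in f (fun _ => false) l), filter_false; [reflexivity|].
    intros y hy. destruct (f y) eqn:ey; [|reflexivity].
    destruct (R_irrefl (R_trans (hx y hy) (hfg y x (or_intror hy) (or_introl eq_refl) ey eg))).
Qed.
Hypothesis R_total : forall x y, R x y \/ x = y \/ R y x.

Lemma StronglySorted_insert x l : StronglySorted R l ->
  exists l', StronglySorted R l' /\ forall y, In y l' <-> y = x \/ In y l.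
Proof.
  induction l as [|y l IH]; intro hs.
  - exists [x]. split; [repeat constructor|]. cbn. intuition.
  - apply StronglySorted_inv in hs as [hs hy]. rewrite Forall_forall in hy.
    destruct (R_total x y) as [h|[<-|h]].
    + exists (x :: y :: l). split; [|cbn; intuition].
      constructor; [constructor; [exact hs|apply Forall_forall, hy]|]. apply Forall_forall.
      intros z [<-|hz]; [exact h|exact (R_trans h (hy z hz))].
    + exists (x :: l). split; [constructor; [|apply Forall_forall]; auto|cbn; intuition].
    + destruct (IH hs) as [l' [hs' e]]. exists (y :: l'). split.
      * constructor; auto. apply Forall_forall. intros z hz. apply e in hz as [->|hz]; auto.
      * intro z. cbn. rewrite e. intuition.
Qed.

Lemma StronglySorted_sort l : exists l', StronglySorted R l' /\ forall x, In x l' <-> In x l.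
Proof.
  induction l as [|x l [l' [hs e]]]; [exists []; split; [constructor|tauto]|].
  destruct (StronglySorted_insert x hs) as [l'' [hs' e']]. exists l''. split; [exact hs'|].
  intro y. rewrite e', e. cbn. intuition.
Qed.

Lemma filter_sorted_split a l : StronglySorted R l ->
  l = filter (fun x => asbool (R x a)) l ++ filter (fun x => asbool (x = a)) l ++
      filter (fun x => asbool (R a x)) l.
Proof.
  intro hs. rewrite <- !filter_orb_sorted by (auto; intros x y _ _ hx hy;
    repeat match goal with h : _ || _ = true |- _ => apply orb_true_iff in h as [h|h] end;
    rewrite asboolT in hx, hy; subst; eauto).
  rewrite (filter_ext_in _ (fun _ => true)), filter_true; [reflexivity|].
  intros x _. destruct (R_total x a) as [h|[h|h]];
    rewrite <- asboolT in h; rewrite h, ?orb_true_r; reflexivity.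
Qed.

Lemma filter_sorted_remove a l : StronglySorted R l ->
  filter (fun x => asbool (x <> a)) l =
  filter (fun x => asbool (R x a)) l ++ filter (fun x => asbool (R a x)) l.
Proof.
  intro hs.
  rewrite <- filter_orb_sorted by (auto; intros x y _ _ hx hy; rewrite asboolT in hx, hy; eauto).
  apply filter_ext_in. intros x _. destruct (R_total x a) as [h|[<-|h]].
  - rewrite (proj2 (asboolT _) h). apply asboolT. intros ->. exact (R_irrefl h).
  - rewrite !(proj2 (asboolF (R x x))) by apply R_irrefl. apply asboolF. tauto.
  - rewrite (proj2 (asboolT _) h), orb_true_r. apply asboolT. intros ->. exact (R_irrefl h).
Qed.
End Sorting.

Lemma StronglySorted_rev A (R : A -> A -> Prop) l :
  StronglySorted R l -> StronglySorted (fun a b => R b a) (rev l).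
Proof.
  induction l as [|x l IH]; cbn; intro h; [constructor|]. apply StronglySorted_inv in h as [h hx].
  apply StronglySorted_app; auto; [repeat constructor|].
  intros a b ha [<-|[]]. rewrite <- in_rev in ha. exact (proj1 (Forall_forall _ _) hx a ha).
Qed.

Lemma StronglySorted_seq s n : StronglySorted lt (seq s n).
Proof.
  revert s; induction n as [|n IH]; intro s; cbn; constructor; auto.
  apply Forall_forall. intros x hx. apply in_seq in hx. lia.
Qed.

Lemma sig_eq A (Q : A -> Prop) (x y : sig Q) : proj1_sig x = proj1_sig y -> x = y.
Proof. destruct x, y; cbn; intro e; subst. f_equal. apply proof_irrelevance. Qed.

Section SigFilter.
Variables (A : Type) (Q : A -> Prop).

Fixpoint sig_filter (l : list A) : list (sig Q) :=
  match l with
  | [] => []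
  | x :: l' => match excluded_middle_informative (Q x) with
               | left h => exist Q x h :: sig_filter l'
               | right _ => sig_filter l' end
  end.

Lemma sig_filter_map l : map (@proj1_sig _ _) (sig_filter l) = filter (fun x => asbool (Q x)) l.
Proof.
  induction l as [|x l IH]; cbn; auto. unfold asbool.
  destruct excluded_middle_informative; cbn; f_equal; auto.
Qed.

Lemma In_sig_filter l x : In x (sig_filter l) <-> In (proj1_sig x) l.
Proof.
  induction l as [|y l IH]; cbn; [tauto|].
  destruct excluded_middle_informative as [h|h]; cbn; rewrite IH.
  - split; intros [e|e]; auto; left; [subst; auto|apply sig_eq; auto].
  - split; auto. intros [e|e]; auto. destruct h. rewrite e. apply proj2_sig.
Qed.
End SigFilter.

Section Restriction.
Variable G : nat -> group.
Implicit Types w : iword G.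

Definition is_positions w m (ps : list (iw_L w)) : Prop :=
  StronglySorted (iw_lt w) ps /\ forall p, In p ps <-> iw_idx w p < m.

Lemma positions_exist w m : exists ps, is_positions w m ps.
Proof.
  assert (hl : exists l : list (iw_L w), forall p, iw_idx w p < m -> In p l).
  { induction m as [|m [l hl]]; [exists []; intros; lia|].
    destruct (iw_fin w m) as [s hs]. exists (s ++ l). intros p hp. apply in_or_app.
    destruct (Nat.eq_dec (iw_idx w p) m); [left; auto|right; apply hl; lia]. }
  destruct hl as [l hl].
  destruct (StronglySorted_sort (iw_lt w) (iw_trans w) (iw_total w) l) as [ps [hs e]].
  exists (filter (fun p => iw_idx w p <? m) ps). split.
  - apply StronglySorted_filter, hs.
  - intro p. rewrite filter_In, e, Nat.ltb_lt. intuition.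
Qed.

Lemma is_positions_unique w m ps ps' : is_positions w m ps -> is_positions w m ps' -> ps = ps'.
Proof.
  intros [h e] [h' e']. apply (StronglySorted_unique (@iw_irrefl _ w) (@iw_trans _ w) h h').
  intro p. rewrite e, e'. reflexivity.
Qed.

Definition positions w m : list (iw_L w) :=
  proj1_sig (constructive_indefinite_description _ (positions_exist w m)).

Lemma positions_spec w m : is_positions w m (positions w m).
Proof. exact (proj2_sig (constructive_indefinite_description _ (positions_exist w m))). Qed.

Lemma positions_eq w m ps : is_positions w m ps -> positions w m = ps.
Proof. apply is_positions_unique, positions_spec. Qed.

Lemma In_positions w m p : In p (positions w m) <-> iw_idx w p < m.
Proof. apply (positions_spec w m). Qed.

Definition restr_word w m : list (letter G) := map (iw_letter w) (positions w m).

Lemma restr_word_restr w m : restr w m (restr_word w m).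
Proof. exists (positions w m). destruct (positions_spec w m). auto. Qed.

Lemma restr_word_unique w m s : restr w m s -> s = restr_word w m.
Proof. intros [ps [h [e ->]]]. unfold restr_word. rewrite (@positions_eq w m ps); split; auto. Qed.

Lemma tp_eq_restr_word w w' :
  tp_eq w w' <-> forall m, fp_eq (fun n => n < m) (restr_word w m) (restr_word w' m).
Proof.
  split.
  - intros h m. destruct (h m) as [s [s' [hs [hs' e]]]].
    rewrite <- (restr_word_unique hs), <- (restr_word_unique hs'). exact e.
  - intros h m. exists (restr_word w m), (restr_word w' m).
    repeat split; auto; apply restr_word_restr.
Qed.

Lemma restr_word_on w m : word_on (fun n => n < m) (restr_word w m).
Proof. apply Forall_map, Forall_forall. intros p hp. apply In_positions, hp. Qed.

Lemma restr_word_le w m M : m <= M -> restr_word w m = wfilter (fun n => n <? m) (restr_word w M).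
Proof.
  intro hm. unfold restr_word, wfilter. rewrite filter_map_swap. f_equal. apply positions_eq. split.
  - apply StronglySorted_filter, positions_spec.
  - intro p. rewrite filter_In, In_positions. cbn [projT1 iw_letter]. rewrite Nat.ltb_lt. lia.
Qed.

Section SubWord.
Variables (w : iword G) (Q : iw_L w -> Prop).

Definition sub_lt (x y : sig Q) : Prop := iw_lt w (proj1_sig x) (proj1_sig y).

Lemma sub_irrefl x : ~ sub_lt x x.
Proof. apply iw_irrefl. Qed.

Lemma sub_trans x y z : sub_lt x y -> sub_lt y z -> sub_lt x z.
Proof. apply iw_trans. Qed.

Lemma sub_total x y : sub_lt x y \/ x = y \/ sub_lt y x.
Proof.
  unfold sub_lt. destruct (iw_total w (proj1_sig x) (proj1_sig y)) as [h|[h|h]]; auto.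
  right; left; apply sig_eq, h.
Qed.

Lemma sub_count : exists f : sig Q -> nat, forall x y, f x = f y -> x = y.
Proof.
  destruct (iw_count w) as [f hf]. exists (fun x => f (proj1_sig x)).
  intros x y e. apply sig_eq, hf, e.
Qed.

Definition sub_idx (x : sig Q) : nat := iw_idx w (proj1_sig x).
Definition sub_val (x : sig Q) : gcar (G (sub_idx x)) := iw_val w (proj1_sig x).

Lemma sub_nontriv x : sub_val x <> gone (G (sub_idx x)).
Proof. apply iw_nontriv. Qed.

Lemma sub_fin n : exists s : list (sig Q), forall p, sub_idx p = n -> In p s.
Proof.
  destruct (iw_fin w n) as [s hs]. exists (sig_filter Q s). intros p e.
  apply In_sig_filter, hs, e.
Qed.

Definition iw_sub : iword G :=
  @IWord G (sig Q) sub_lt sub_irrefl sub_trans sub_total sub_count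
    sub_idx sub_val sub_nontriv sub_fin.

Lemma restr_word_sub m :
  restr_word iw_sub m = map (iw_letter w) (filter (fun p => asbool (Q p)) (positions w m)).
Proof.
  unfold restr_word. rewrite (@positions_eq iw_sub m (sig_filter Q (positions w m))).
  - rewrite <- sig_filter_map, map_map. reflexivity.
  - split.
    + apply (StronglySorted_map (iw_lt w) (@proj1_sig _ _)). rewrite sig_filter_map.
      apply StronglySorted_filter, positions_spec.
    + intro p. exact (iff_trans (In_sig_filter _ p) (In_positions w m _)).
Qed.
End SubWord.

Lemma restr_word_cat w1 w2 m : restr_word (iw_cat w1 w2) m = restr_word w1 m ++ restr_word w2 m.
Proof.
  unfold restr_word.
  rewrite (@positions_eq (iw_cat w1 w2) m (map inl (positions w1 m) ++ map inr (positions w2 m))).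
  { rewrite map_app, !map_map. reflexivity. }
  split.
  - apply StronglySorted_app.
    + apply StronglySorted_map, positions_spec.
    + apply StronglySorted_map, positions_spec.
    + intros x y hx hy. apply in_map_iff in hx as [a [<- _]]. apply in_map_iff in hy as [b [<- _]].
      exact I.
  - intros [a|b]; rewrite in_app_iff, !in_map_iff; cbn; rewrite <- In_positions; split.
    + intros [[a' [e h]]|[b' [e _]]]; [injection e as <-; exact h|discriminate].
    + intro h. left. exists a. auto.
    + intros [[a' [e _]]|[b' [e h]]]; [discriminate|injection e as <-; exact h].
    + intro h. right. exists b. auto.
Qed.

Lemma restr_word_inv w m : restr_word (iw_inv w) m = word_inv (restr_word w m).
Proof.
  unfold restr_word. rewrite (@positions_eq (iw_inv w) m (rev (positions w m))).
  - unfold word_inv. rewrite map_rev, map_map. reflexivity.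
  - split.
    + apply StronglySorted_rev, positions_spec.
    + intro p. rewrite <- in_rev. exact (In_positions w m p).
Qed.

Lemma restr_word_empty m : restr_word (iw_empty G) m = [].
Proof.
  unfold restr_word. rewrite (@positions_eq (iw_empty G) m []); [reflexivity|].
  split; [constructor|intros []].
Qed.

Lemma restr_word_conj_prod g f l m : restr_word (conj_prod ((g, f) :: l)) m =
  ((restr_word g m ++ restr_word f m) ++ word_inv (restr_word g m)) ++ restr_word (conj_prod l) m.
Proof. cbn [conj_prod]. rewrite !restr_word_cat, restr_word_inv. reflexivity. Qed.
End Restriction.

(** * The normal closure of the free product *)

Section NormalClosure.
Variable G : nat -> group.
Implicit Types v w : iword G.

Definition tail_trivial N v : Prop :=
  forall m, fp_eq_all (wfilter (Nat.leb N) (restr_word v m)) [].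

Lemma finite_word_bounded w : is_finite_word w -> exists N, forall p, iw_idx w p < N.
Proof.
  intros [s hs]. exists (S (list_max (map (iw_idx w) s))). intro p.
  enough (iw_idx w p <= list_max (map (iw_idx w) s)) by lia.
  apply (proj1 (Forall_forall _ _) (proj1 (list_max_le _ _) (le_n _))), in_map, hs.
Qed.

Lemma finite_words_bounded (l : list (iword G * iword G)) :
  Forall (fun gf => is_finite_word (snd gf)) l ->
  exists N, forall gf, In gf l -> forall p, iw_idx (snd gf) p < N.
Proof.
  induction 1 as [|gf l hgf _ [N1 h1]]; [exists 0; intros _ []|].
  destruct (finite_word_bounded hgf) as [N2 h2]. exists (N1 + N2).
  intros gf' [<-|hi] p; [specialize (h2 p)|specialize (h1 _ hi p)]; lia.
Qed.

Lemma conj_prod_tail_trivial l N : (forall gf, In gf l -> forall p, iw_idx (snd gf) p < N) ->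
  tail_trivial N (conj_prod l).
Proof.
  intros hb m. induction l as [|[g f] l IH].
  - cbn [conj_prod]. rewrite restr_word_empty. reflexivity.
  - rewrite restr_word_conj_prod, !wfilter_app, wfilter_inv.
    rewrite (wfilter_nil (Nat.leb N) (restr_word f m)), app_nil_r.
    + rewrite fp_eq_cancel_r by apply word_on_all.
      apply IH. intros; apply hb; right; assumption.
    + intros x hx. apply in_map_iff in hx as [p [<- _]]. apply Nat.leb_gt.
      exact (hb _ (or_introl eq_refl) p).
Qed.

Lemma in_ncl_tail_trivial v : in_ncl v -> exists N, tail_trivial N v.
Proof.
  intros [l [hl htp]]. destruct (finite_words_bounded hl) as [N hN]. exists N. intro m.
  rewrite tp_eq_restr_word in htp. rewrite <- (conj_prod_tail_trivial l hN m).
  rewrite (fp_eq_all_of (htp m)). reflexivity.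
Qed.

Section LetterRemoval.
Variables (v : iword G) (a : iw_L v).

Definition iw_before : iword G := iw_sub v (fun p => iw_lt v p a).
Definition iw_at : iword G := iw_sub v (fun p => p = a).
Definition iw_remove : iword G := iw_sub v (fun p => p <> a).

Lemma is_finite_iw_at : is_finite_word iw_at.
Proof.
  exists [exist (fun p => p = a) a eq_refl]. intros [p e]. left. apply sig_eq. symmetry. exact e.
Qed.

Lemma restr_word_extract m : exists Z,
  restr_word v m = restr_word iw_before m ++ restr_word iw_at m ++ Z /\
  restr_word iw_remove m = restr_word iw_before m ++ Z.
Proof.
  pose proof (proj1 (positions_spec v m)) as hs.
  exists (map (iw_letter v) (filter (fun p => asbool (iw_lt v a p)) (positions v m))).
  unfold iw_before, iw_at, iw_remove. rewrite !restr_word_sub.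
  unfold restr_word. rewrite <- !map_app.
  rewrite (filter_sorted_remove (iw_irrefl v) (iw_trans v) (iw_total v) a hs).
  rewrite <- (filter_sorted_split (iw_irrefl v) (iw_trans v) (iw_total v) a hs).
  split; reflexivity.
Qed.
Lemma tp_eq_extract l :
  tp_eq iw_remove (conj_prod l) -> tp_eq v (conj_prod ((iw_before, iw_at) :: l)).
Proof.
  rewrite !tp_eq_restr_word. intros h m. destruct (restr_word_extract m) as [Z [ev er]].
  rewrite restr_word_conj_prod, <- h, er, ev, <- !app_assoc.
  rewrite (app_assoc (word_inv _)), fp_eq_cancel_l by apply restr_word_on. reflexivity.
Qed.

Lemma tail_trivial_remove N : iw_idx v a < N -> tail_trivial N v -> tail_trivial N iw_remove.
Proof.
  intros ha ht m. specialize (ht m). destruct (restr_word_extract m) as [Z [ev er]].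
  rewrite ev, !wfilter_app, (wfilter_nil _ (restr_word iw_at m)) in ht.
  - rewrite er, wfilter_app. exact ht.
  - intros x hx. unfold iw_at in hx. rewrite restr_word_sub in hx.
    apply in_map_iff in hx as [p [<- hp]]. apply filter_In in hp as [_ hp]. rewrite asboolT in hp.
    subst p. apply Nat.leb_gt, ha.
Qed.

Lemma positions_remove_length N : iw_idx v a < N ->
  length (positions iw_remove N) < length (positions v N).
Proof.
  intro ha. rewrite <- (length_map (iw_letter iw_remove)). fold (restr_word iw_remove N).
  unfold iw_remove. rewrite restr_word_sub, length_map.
  set (f := fun p => asbool (p <> a)).
  assert (hne : length (filter f (positions v N)) <> length (positions v N)).
  { intro e. apply filter_length_forallb in e. rewrite forallb_forall in e.
    rewrite <- In_positions in ha. specialize (e a ha). unfold f in e. rewrite asboolT in e.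
    tauto. }
  pose proof (filter_length_le f (positions v N)). lia.
Qed.
End LetterRemoval.

(* Induction on the number of letters of index below [N]: such a letter [a] is split off as
   the conjugate of the one-letter word [a] by the part of the word preceding it. *)
Lemma tail_trivial_in_ncl N v : tail_trivial N v -> in_ncl v.
Proof.
  remember (length (positions v N)) as k eqn:hk. revert v hk.
  induction k as [k IH] using (well_founded_induction lt_wf). intros v -> ht.
  destruct (positions v N) as [|a ps] eqn:E.
  - exists []. split; [constructor|]. apply tp_eq_restr_word. intro m.
    cbn [conj_prod]. rewrite restr_word_empty.
    apply fp_eq_restrict; [apply restr_word_on|constructor|].
    rewrite <- (ht m), wfilter_id; [reflexivity|].
    intros x hx. apply in_map_iff in hx as [p [<- _]]. apply Nat.leb_le.
    destruct (Nat.lt_ge_cases (iw_idx v p) N) as [hp|hp]; [|exact hp].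
    apply In_positions in hp. rewrite E in hp. destruct hp.
  - assert (ha : iw_idx v a < N) by (apply In_positions; rewrite E; left; reflexivity).
    pose proof (positions_remove_length v a ha) as hlt. rewrite E in hlt.
    destruct (IH _ hlt (iw_remove v a) eq_refl (tail_trivial_remove a ha ht)) as [l [hl htp]].
    exists ((iw_before v a, iw_at v a) :: l). split.
    + constructor; [apply is_finite_iw_at|exact hl].
    + apply tp_eq_extract, htp.
Qed.

Lemma arch_eq_of_restr_word v w : (forall m, restr_word v m = restr_word w m) -> arch_eq v w.
Proof.
  intro e. apply (tail_trivial_in_ncl (N := 0)). intro m.
  rewrite wfilter_id by reflexivity. rewrite restr_word_cat, restr_word_inv, e.
  apply fp_eq_cancel_r, word_on_all.
Qed.
End NormalClosure.

(** * The substituted infinite word *)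

Lemma map_nth_seq A (l : list A) d : map (fun k => nth k l d) (seq 0 (length l)) = l.
Proof.
  induction l as [|x l IH]; cbn; [reflexivity|]. f_equal.
  rewrite <- seq_shift, map_map. exact IH.
Qed.

Section SubstitutedWord.
Variables (G H : nat -> group) (P : nat -> list nat) (phi : forall n, G n -> list (letter H)).
Hypothesis hP : finite_partition P.
Hypothesis hphi : forall n, @inj_hom_to_fp (G n) H (fun i => In i (P n)) (phi n).
Variable w : iword G.

Notation subst_letter := (subst_letter phi).
Notation subst_word := (subst_word phi).

(* The letters of the new word are the pairs (p, k): the [k]-th letter of the image of the
   letter at position [p], ordered lexicographically. *)
Definition image_len (p : iw_L w) : nat := length (subst_letter (iw_letter w p)).
Definition in_image (x : iw_L w * nat) : Prop := snd x < image_len (fst x).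
Definition image_letter (x : iw_L w * nat) : letter H :=
  nth (snd x) (subst_letter (iw_letter w (fst x))) (existT _ 0 (gone (H 0))).

Definition lex_lt (x y : iw_L w * nat) : Prop :=
  iw_lt w (fst x) (fst y) \/ (fst x = fst y /\ snd x < snd y).

Definition subst_lt (x y : sig in_image) : Prop := lex_lt (proj1_sig x) (proj1_sig y).

Lemma subst_irrefl x : ~ subst_lt x x.
Proof. intros [h|[_ h]]; [exact (iw_irrefl w _ h)|lia]. Qed.

Lemma subst_trans x y z : subst_lt x y -> subst_lt y z -> subst_lt x z.
Proof.
  unfold subst_lt, lex_lt. intros [h1|[e1 h1]] [h2|[e2 h2]].
  - left; exact (iw_trans w _ _ _ h1 h2).
  - left; rewrite <- e2; exact h1.
  - left; rewrite e1; exact h2.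
  - right; split; [congruence|lia].
Qed.

Lemma subst_total x y : subst_lt x y \/ x = y \/ subst_lt y x.
Proof.
  unfold subst_lt, lex_lt. destruct x as [[p k] hx], y as [[p' k'] hy]; cbn.
  destruct (iw_total w p p') as [h|[<-|h]]; auto.
  destruct (Nat.lt_trichotomy k k') as [h|[<-|h]]; auto.
  right; left. apply sig_eq. reflexivity.
Qed.

Lemma subst_count : exists f : sig in_image -> nat, forall x y, f x = f y -> x = y.
Proof.
  destruct (iw_count w) as [f hf].
  exists (fun x => to_nat (f (fst (proj1_sig x)), snd (proj1_sig x))).
  intros [[p k] hx] [[p' k'] hy] e. apply to_nat_inj in e. cbn in e. injection e as e1 e2.
  apply hf in e1. subst. apply sig_eq. reflexivity.
Qed.

Definition subst_idx (x : sig in_image) : nat := projT1 (image_letter (proj1_sig x)).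
Definition subst_val (x : sig in_image) : gcar (H (subst_idx x)) :=
  projT2 (image_letter (proj1_sig x)).

Lemma image_letter_In x : in_image x -> In (image_letter x) (subst_letter (iw_letter w (fst x))).
Proof. apply nth_In. Qed.

Lemma subst_nontriv x : subst_val x <> gone (H (subst_idx x)).
Proof.
  apply (subst_letter_nontriv phi (iw_letter w (fst (proj1_sig x)))), image_letter_In, proj2_sig.
Qed.

Lemma image_letter_block x : in_image x -> In (projT1 (image_letter x)) (P (iw_idx w (fst x))).
Proof.
  intro h. exact (proj1 (Forall_forall _ _) (subst_letter_on P phi hphi _) _ (image_letter_In h)).
Qed.

Definition expand (ps : list (iw_L w)) : list (iw_L w * nat) :=
  flat_map (fun p => map (pair p) (seq 0 (image_len p))) ps.

Lemma In_expand ps x : in_image x -> In (fst x) ps -> In x (expand ps).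
Proof.
  destruct x as [p k]. unfold in_image; cbn. intros h hp. apply in_flat_map. exists p.
  split; [exact hp|]. apply in_map, in_seq. lia.
Qed.

Lemma expand_in_image ps x : In x (expand ps) -> in_image x.
Proof.
  intro hx. apply in_flat_map in hx as [p [_ hx]]. apply in_map_iff in hx as [k [<- hk]].
  apply in_seq in hk. unfold in_image; cbn. lia.
Qed.

Lemma subst_fin n : exists s : list (sig in_image), forall p, subst_idx p = n -> In p s.
Proof.
  destruct (proj2 hP n) as [k [hk _]]. destruct (iw_fin w k) as [s hs].
  exists (sig_filter in_image (expand s)). intros x e. apply In_sig_filter.
  apply In_expand; [apply proj2_sig|]. apply hs.
  apply (partition_block_unique hP n); [|exact hk].
  rewrite <- e. apply image_letter_block, proj2_sig.
Qed.

Definition iw_subst : iword H :=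
  @IWord H (sig in_image) subst_lt subst_irrefl subst_trans subst_total subst_count
    subst_idx subst_val subst_nontriv subst_fin.

Lemma expand_sorted ps : StronglySorted (iw_lt w) ps -> StronglySorted lex_lt (expand ps).
Proof.
  induction 1 as [|p ps _ IH hp]; [constructor|]. cbn. apply StronglySorted_app; [|exact IH|].
  - apply StronglySorted_map. apply (StronglySorted_impl (R := lt)); [|apply StronglySorted_seq].
    intros a b hab. right. cbn. auto.
  - intros x y hx hy. apply in_map_iff in hx as [k [<- _]].
    apply in_flat_map in hy as [p' [hp' hy]].
    apply in_map_iff in hy as [k' [<- _]]. left. exact (proj1 (Forall_forall _ _) hp p' hp').
Qed.

Lemma map_image_letter_expand ps : map image_letter (expand ps) = subst_word (map (iw_letter w) ps).
Proof.
  induction ps as [|p ps IH]; [reflexivity|].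
  change (map image_letter (map (pair p) (seq 0 (image_len p)) ++ expand ps) =
          subst_letter (iw_letter w p) ++ subst_word (map (iw_letter w) ps)).
  rewrite map_app, IH, map_map. f_equal. apply (map_nth_seq (subst_letter (iw_letter w p))).
Qed.

Lemma positions_subst m M : (forall n i, In i (P n) -> i < m -> n < M) ->
  positions iw_subst m =
  sig_filter in_image (filter (fun x => projT1 (image_letter x) <? m) (expand (positions w M))).
Proof.
  intro hM. apply positions_eq. split.
  - apply (StronglySorted_map lex_lt (@proj1_sig _ _)). rewrite sig_filter_map.
    apply StronglySorted_filter, StronglySorted_filter, expand_sorted, positions_spec.
  - intro x. change (iw_idx iw_subst x) with (projT1 (image_letter (proj1_sig x))).
    rewrite (In_sig_filter (Q := in_image) _ x), filter_In, Nat.ltb_lt.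
    split; [tauto|]. intro h. split; [|exact h].
    apply In_expand; [apply proj2_sig|]. apply In_positions.
    exact (hM _ _ (image_letter_block (proj2_sig x)) h).
Qed.

Lemma restr_word_subst m M : (forall n i, In i (P n) -> i < m -> n < M) ->
  restr_word iw_subst m = wfilter (fun i => i <? m) (subst_word (restr_word w M)).
Proof.
  intro hM. unfold restr_word. rewrite (positions_subst hM), <- map_image_letter_expand.
  transitivity (map image_letter (map (@proj1_sig _ _) (sig_filter in_image
    (filter (fun x => projT1 (image_letter x) <? m) (expand (positions w M)))))).
  { rewrite map_map. apply map_ext. intros [x hx]. symmetry. apply sigT_eta. }
  rewrite sig_filter_map, (filter_ext_in _ (fun _ => true)), filter_true.
  - unfold wfilter. rewrite filter_map_swap. reflexivity.
  - intros x hx. apply asboolT. apply filter_In in hx as [hx _]. exact (expand_in_image _ _ hx).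
Qed.
End SubstitutedWord.

Section Embedding.
Variables (G H : nat -> group) (P : nat -> list nat) (phi : forall n, G n -> list (letter H)).
Hypothesis hP : finite_partition P.
Hypothesis hphi : forall n, @inj_hom_to_fp (G n) H (fun i => In i (P n)) (phi n).

Notation f := (iw_subst phi hP hphi).
Notation subst_word := (subst_word phi).

Lemma iw_subst_cat w w' : arch_eq (f (iw_cat w w')) (iw_cat (f w) (f w')).
Proof.
  apply arch_eq_of_restr_word. intro m. destruct (partition_index_bounded hP m) as [M hM].
  rewrite restr_word_cat, !(restr_word_subst phi hP hphi _ hM), restr_word_cat.
  rewrite subst_word_app, wfilter_app. reflexivity.
Qed.

Lemma restr_word_subst_quotient w w' m M : (forall n i, In i (P n) -> i < m -> n < M) ->
  fp_eq_all (restr_word (iw_cat (f w) (iw_inv (f w'))) m)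
            (wfilter (fun i => i <? m) (subst_word (restr_word (iw_cat w (iw_inv w')) M))).
Proof.
  intro hM. rewrite !restr_word_cat, !restr_word_inv, !(restr_word_subst phi hP hphi _ hM).
  rewrite subst_word_app, (subst_word_inv P phi hphi), !wfilter_app, wfilter_inv. reflexivity.
Qed.

Lemma iw_subst_compat w w' : arch_eq w w' -> arch_eq (f w) (f w').
Proof.
  intro h. apply in_ncl_tail_trivial in h as [N hN].
  destruct (partition_blocks_bounded P N) as [N' hN'].
  apply (tail_trivial_in_ncl (N := N')). intro m. destruct (partition_index_bounded hP m) as [M hM].
  rewrite (restr_word_subst_quotient w w' hM), wfilter_wfilter.
  rewrite (wfilter_subst_word_drop P phi hphi _ (Nat.leb N)), (subst_word_fp_eq P phi hphi (hN M)).
  - reflexivity.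
  - intros n i hi hn. apply andb_false_iff. left. apply Nat.leb_gt.
    apply Nat.leb_gt in hn. exact (hN' n i hn hi).
Qed.

Lemma iw_subst_reflect w w' : arch_eq (f w) (f w') -> arch_eq w w'.
Proof.
  intro h. apply in_ncl_tail_trivial in h as [N' hN'].
  destruct (partition_index_bounded hP N') as [N hN].
  apply (tail_trivial_in_ncl (N := N)). intro m.
  destruct (partition_blocks_bounded P m) as [m' hm'].
  destruct (partition_index_bounded hP m') as [M hM].
  set (sel := fun n => Nat.leb N n && (n <? m)).
  destruct (block_selector hP sel) as [q hq].
  assert (hsub : forall i, q i = true -> N' <= i /\ i < m').
  { intros i hi. destruct (proj2 hP i) as [n [hin _]]. rewrite (hq n i hin) in hi.
    apply andb_true_iff in hi as [h1 h2]. apply Nat.leb_le in h1. apply Nat.ltb_lt in h2.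
    split; [|exact (hm' n i h2 hin)].
    destruct (Nat.lt_ge_cases i N') as [hi'|hi']; [specialize (hN n i hin hi'); lia|exact hi']. }
  apply (subst_word_trivial phi hP hphi).
  rewrite (restr_word_le _ (m := m) (M := M + m)) by lia. rewrite wfilter_wfilter. fold sel.
  rewrite <- (wfilter_subst_word P phi hphi q sel) by exact hq.
  assert (hM' : forall n i, In i (P n) -> i < m' -> n < M + m)
    by (intros n i hi hlt; specialize (hM n i hi hlt); lia).
  rewrite <- (wfilter_absorb q (fun i => i <? m')), <- (restr_word_subst_quotient w w' hM')
    by (intros i hi; apply Nat.ltb_lt, (hsub i hi)).
  rewrite <- (wfilter_absorb q (Nat.leb N')), (hN' m').
  - reflexivity.
  - intros i hi. apply Nat.leb_le, (hsub i hi).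
Qed.
End Embedding.

Theorem proposition19 (G H : nat -> group) (P : nat -> list nat) :
  finite_partition P ->
  (forall n, exists phi : G n -> list (letter H),
      @inj_hom_to_fp (G n) H (fun i => In i (P n)) phi) ->
  arch_embeds G H.
Proof.
  intros hP hex.
  set (phi := fun n => proj1_sig (constructive_indefinite_description _ (hex n))).
  assert (hphi : forall n, @inj_hom_to_fp (G n) H (fun i => In i (P n)) (phi n))
    by (intro n; exact (proj2_sig (constructive_indefinite_description _ (hex n)))).
  exists (iw_subst phi hP hphi). split; [|split].
  - apply iw_subst_compat.
  - apply iw_subst_cat.
  - apply iw_subst_reflect.
Qed.
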